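(* Let $n\ge1$ and let $\boldsymbol{\xi}=(\xi_1,\dots,\xi_n)\in\mathbb{R}^n$ be an exchangeable random vector with $\mathbb{E}[\|\boldsymbol{\xi}\|_2^2]<\infty$, where $\|\boldsymbol{\xi}\|_2^2=\sum_i\xi_i^2$. Let $S_k=\xi_1+\dots+\xi_k$. Then for all $1\le k\le n$, $$\mathrm{Var}(S_k)\le\frac{k}{n}\,\mathbb{E}\big[\|\boldsymbol{\xi}\|_2^2\big]+\frac{k^2}{n^2}\,\mathrm{Var}(S_n).$$
   Context: Exchangeable means the law of $(\xi_{\sigma(1)},\dots,\xi_{\sigma(n)})$ equals that of $(\xi_1,\dots,\xi_n)$ for every permutation $\sigma$. *)

From HB Require Import structures.
From mathcomp Require Import all_boot all_order all_algebra all_fingroup.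
From mathcomp Require Import all_classical all_reals all_analysis.
Set Implicit Arguments. Unset Strict Implicit. Unset Printing Implicit Defensive.
Import Order.TTheory GRing.Theory Num.Theory.
Local Open Scope classical_set_scope.
Local Open Scope ring_scope.

(* The random vector xi takes values in R^n, modelled as n.-tuple R with its
   canonical product (coordinate-generated) sigma-algebra, i.e. Borel(R^n). *)

Definition coord {T : Type} {R : Type} (n : nat) (xi : T -> n.-tuple R)
  (i : 'I_n) : T -> R := fun w => tnth (xi w) i.

Definition permvec {T : Type} {R : Type} (n : nat) (s : 'S_n)
  (xi : T -> n.-tuple R) : T -> n.-tuple R :=
  fun w => [tuple tnth (xi w) (s i) | i < n].

Definition exchangeable d (T : measurableType d) (R : realType)
  (P : probability T R) (n : nat) (xi : T -> n.-tuple R) : Prop :=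
  forall (s : 'S_n) (B : set (n.-tuple R)), measurable B ->
    P (permvec s xi @^-1` B) = P (xi @^-1` B).

(* partial sums S_k = xi_1 + ... + xi_k (0-indexed coordinates i < k) *)
Definition partial_sum {T : Type} {R : realType} (n : nat)
  (xi : T -> n.-tuple R) (k : nat) : T -> R :=
  fun w => \sum_(i < n | (i < k)%N) coord xi i w.

Definition sqnorm {T : Type} {R : realType} (n : nat)
  (xi : T -> n.-tuple R) : T -> R :=
  fun w => \sum_(i < n) (coord xi i w) ^+ 2.

From Pilot Require Import Defs.
From HB Require Import structures.
From mathcomp Require Import all_boot all_order all_algebra all_fingroup.
From mathcomp Require Import all_classical all_reals all_analysis.
From mathcomp Require Import measurable_realfun lra ring.
Set Implicit Arguments. Unset Strict Implicit. Unset Printing Implicit Defensive.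
Import Order.TTheory GRing.Theory Num.Theory.
Local Open Scope classical_set_scope.
Local Open Scope ring_scope.

(** By exchangeability the moments [E xi_i = m], [E xi_i^2 = s] and
    [E xi_i xi_j = c] (for [i != j]) do not depend on the indices, hence
    [Var S_k = k (s - c) + k^2 (c - m^2)] and [E ||xi||^2 = n s].  The
    difference between the two sides of the inequality is then
    [(k / n) (k s + (n - k) c)], and [k s + (n - k) c] is affine in [k],
    equal to [n s >= 0] at [k = n] and to [s + (n - 1) c >= n m^2 >= 0] at
    [k = 1], the latter being [Var S_n >= 0]. *)

(* [coord] alone would refer to the coordinate function of [vector]. *)
Local Notation coord := Defs.coord.

Lemma perm_pair_transitive (X : finType) (x y x' y' : X) :
  (x == y) = (x' == y') -> exists s : {perm X}, s x = x' /\ s y = y'.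
Proof.
move=> eq_xy; exists (tperm x x' * tperm (tperm x x' y) y')%g.
rewrite !permM !tpermL; split=> //; move: eq_xy.
have [<- /esym/eqP <-|ne_xy eq_xy] := eqVneq x y; first by rewrite !tpermL.
apply: tpermD; last by rewrite eq_sym -eq_xy.
by rewrite -[x' in _ != x'](tpermL x x') (inj_eq perm_inj) eq_sym.
Qed.

Lemma sumr_ord_lt_const (V : nmodType) (n k : nat) (x : V) : (k <= n)%N ->
  \sum_(i < n | (i < k)%N) x = x *+ k.
Proof.
by move=> le_kn; rewrite -(big_ord_widen _ (fun=> x) le_kn) sumr_const card_ord.
Qed.

Lemma sumr_ord_lt_if_eq (V : pzRingType) (n k : nat) (s c : V) : (k <= n)%N ->
  \sum_(i < n | (i < k)%N) \sum_(j < n | (j < k)%N) (if i == j then s else c) =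
  k%:R * (s - c) + k%:R ^+ 2 * c.
Proof.
move=> le_kn.
have row (i : 'I_n) : (i < k)%N ->
    \sum_(j < n | (j < k)%N) (if i == j then s else c) = (s - c) + c *+ k.
  move=> lt_ik; rewrite -(sumr_ord_lt_const c le_kn).
  rewrite (bigD1 i) //= eqxx [in RHS](bigD1 i) //= addrA subrK.
  by congr (_ + _); apply: eq_bigr => j /andP[_ ne_ji]; rewrite eq_sym (negbTE ne_ji).
rewrite (eq_bigr _ row) sumr_ord_lt_const // mulrnDl -mulrnA.
by rewrite mulr_natl -natrX mulr_natl mulnn.
Qed.

Lemma exchangeable_moment_ineq (R : realFieldType) (K N s c m : R) :
  1 <= K <= N -> 0 <= s -> 0 <= N * (s - c) + N ^+ 2 * (c - m ^+ 2) ->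
  K * (s - c) + K ^+ 2 * (c - m ^+ 2) <=
    K / N * (N * s) + K ^+ 2 / N ^+ 2 * (N * (s - c) + N ^+ 2 * (c - m ^+ 2)).
Proof.
move=> /andP[K_ge1 le_KN] s_ge0 VN_ge0.
have N_gt0 : 0 < N by lra.
have cross_ge0 : 0 <= K * s + (N - K) * c.
  have sum_ge0 : 0 <= s + (N - 1) * c.
    have : 0 <= (s - c) + N * (c - m ^+ 2).
      by rewrite -(pmulr_rge0 _ N_gt0) mulrDr mulrA -expr2.
    have := sqr_ge0 m; nra.
  have [N_le1|N_gt1] := lerP N 1.
    have -> : K = 1 by lra.
    have -> : N = 1 by lra.
    lra.
  have N1_gt0 : 0 < N - 1 by rewrite subr_gt0.
  rewrite -(pmulr_rge0 _ N1_gt0).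
  have -> : (N - 1) * (K * s + (N - K) * c) =
            (N - K) * (s + (N - 1) * c) + (K - 1) * (N * s) by ring.
  by rewrite addr_ge0 // !mulr_ge0 //; lra.
rewrite -subr_ge0.
have -> : K / N * (N * s) + K ^+ 2 / N ^+ 2 * (N * (s - c) + N ^+ 2 * (c - m ^+ 2))
    - (K * (s - c) + K ^+ 2 * (c - m ^+ 2)) = K / N * (K * s + (N - K) * c).
  by field; lra.
by apply: mulr_ge0 => //; apply: divr_ge0; lra.
Qed.

Lemma le_Lfun1 d (T : measurableType d) (R : realType)
    (mu : {measure set T -> \bar R}) (f g : T -> R) :
  measurable_fun setT f -> (forall x, `|f x| <= g x) ->
  g \in Lfun mu 1 -> f \in Lfun mu 1.
Proof.
move=> mf le_fg /Lfun1_integrable g_int; apply/Lfun1_integrable.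
apply: le_integrable g_int => // [|x _]; first exact/measurable_EFinP.
by rewrite /= lee_fin (le_trans (le_fg x)) ?ler_norm.
Qed.

Section expectation.
Context d (T : measurableType d) (R : realType) (P : probability T R).

Lemma ge0_expectation_Lfun1 (f : T -> R) : measurable_fun setT f ->
  (forall x, 0 <= f x) -> ('E_P[f] < +oo)%E -> f \in Lfun P 1.
Proof.
move=> mf f_ge0; rewrite unlock => f_fin; apply/Lfun1_integrable/integrableP.
split; first exact/measurable_EFinP.
by rewrite (eq_integral (fun x => (f x)%:E)) // => x _; rewrite /= ger0_norm.
Qed.

Lemma expectation_sumEFin (I : Type) (r : seq I) (Q : pred I) (F : I -> T -> R) :
  (forall i, Q i -> F i \in Lfun P 1) ->
  ('E_P[\sum_(i <- r | Q i) F i] = (\sum_(i <- r | Q i) fine 'E_P[F i])%:E)%E.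
Proof.
move=> F_int; elim: r => [|i r IH]; first by rewrite !big_nil expectation_cst.
rewrite !big_cons; case: ifP => // Qi.
rewrite expectationD ?F_int ?rpred_sum // IH EFinD.
by rewrite fineK ?expectation_fin_num ?F_int.
Qed.

End expectation.

Section random_vector.
Context d (T : measurableType d) (R : realType) (P : probability T R) (n : nat).
Variable xi : T -> n.-tuple R.
Hypothesis mxi : measurable_fun setT xi.

Lemma measurable_coord (i : 'I_n) : measurable_fun setT (coord xi i).
Proof. exact: measurableT_comp (measurable_tnth i) mxi. Qed.

Lemma tnth_permvec (s : 'S_n) (i : 'I_n) w :
  tnth (permvec s xi w) i = coord xi (s i) w.
Proof. by rewrite tnth_map tnth_ord_tuple. Qed.

Lemma measurable_permvec (s : 'S_n) : measurable_fun setT (permvec s xi).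
Proof.
apply/measurable_fun_tnthP => i.
rewrite (_ : _ \o _ = coord xi (s i)); first exact: measurable_coord.
by apply/funext => w; rewrite /= tnth_permvec.
Qed.

Definition moment1 (i : 'I_n) : R := fine 'E_P[coord xi i]%E.
Definition moment2 (i j : 'I_n) : R := fine 'E_P[coord xi i * coord xi j]%E.

Lemma moment2_diag_ge0 (i : 'I_n) : 0 <= moment2 i i.
Proof. by rewrite fine_ge0 // expectation_ge0 // => w; rewrite /= -expr2 sqr_ge0. Qed.

Lemma coord_sqr_le_sqnorm (i : 'I_n) w : coord xi i w ^+ 2 <= sqnorm xi w.
Proof. by rewrite /sqnorm (bigD1 i) //= lerDl sumr_ge0 // => j _; rewrite sqr_ge0. Qed.

Lemma sqnorm_ge0 w : 0 <= sqnorm xi w.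
Proof. by rewrite sumr_ge0 // => i _; rewrite sqr_ge0. Qed.

Section square_integrable.
Hypothesis sqnorm_fin : ('E_P[sqnorm xi] < +oo)%E.

Lemma sqnorm_Lfun1 : sqnorm xi \in Lfun P 1.
Proof.
apply: ge0_expectation_Lfun1 sqnorm_fin => [|w]; last exact: sqnorm_ge0.
by apply: measurable_sum => i; apply: measurable_funX; exact: measurable_coord.
Qed.

Lemma coord_mul_Lfun1 (i j : 'I_n) : coord xi i * coord xi j \in Lfun P 1.
Proof.
apply: le_Lfun1 sqnorm_Lfun1 => [|w /=].
  by apply: measurable_funM; exact: measurable_coord.
have := coord_sqr_le_sqnorm i w; have := coord_sqr_le_sqnorm j w.
rewrite normrM; set a := coord xi i w; set b := coord xi j w.
have := real_normK (num_real a); have := real_normK (num_real b).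
by have := sqr_ge0 (`|a| - `|b|); nra.
Qed.

Lemma coord_Lfun1 (i : 'I_n) : coord xi i \in Lfun P 1.
Proof.
apply: (@le_Lfun1 _ _ _ _ _ (cst 1 + sqnorm xi)) => [|w /=|].
- exact: measurable_coord.
- change (`|coord xi i w| <= 1 + sqnorm xi w).
  have := coord_sqr_le_sqnorm i w; set a := coord xi i w.
  have := real_normK (num_real a).
  by have := sqr_ge0 (`|a| - 1); nra.
- by rewrite rpredD ?Lfun_cst ?sqnorm_Lfun1.
Qed.

Lemma variance_partial_sum k : ('V_P[partial_sum xi k] =
  ((\sum_(i < n | (i < k)%N) \sum_(j < n | (j < k)%N) moment2 i j)
   - (\sum_(i < n | (i < k)%N) moment1 i) ^+ 2)%:E)%E.
Proof.
have -> : partial_sum xi k = \sum_(i < n | (i < k)%N) coord xi i.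
  by rewrite fct_sumE.
set S := \sum_(i < n | (i < k)%N) coord xi i.
have sqrE : S * S =
    \sum_(i < n | (i < k)%N) \sum_(j < n | (j < k)%N) coord xi i * coord xi j.
  by rewrite mulr_suml; apply: eq_bigr => i _; rewrite mulr_sumr.
have S_int : S \in Lfun P 1 by rewrite rpred_sum // => i _; exact: coord_Lfun1.
have row_int i : \sum_(j < n | (j < k)%N) coord xi i * coord xi j \in Lfun P 1.
  by rewrite rpred_sum // => j _; exact: coord_mul_Lfun1.
rewrite /variance covarianceE //; last by rewrite sqrE rpred_sum.
rewrite sqrE expectation_sumEFin //.
under eq_bigr => i _ do
  rewrite (expectation_sumEFin _ (fun j _ => coord_mul_Lfun1 i j)) /=.
rewrite /S expectation_sumEFin => [|i _]; last exact: coord_Lfun1.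
by rewrite -EFinM -EFinB expr2.
Qed.

Lemma expectation_sqnorm : ('E_P[sqnorm xi] = (\sum_(i < n) moment2 i i)%:E)%E.
Proof.
rewrite -expectation_sumEFin => [|i _]; last exact: coord_mul_Lfun1.
congr ('E_P[_])%E; rewrite fct_sumE; apply/funext => w.
by apply: eq_bigr => i _; rewrite expr2.
Qed.

Section constant_moments.
Variables m s c : R.
Hypothesis moment1E : forall i, moment1 i = m.
Hypothesis moment2E : forall i j, moment2 i j = if i == j then s else c.

Lemma variance_partial_sum_const k : (k <= n)%N ->
  ('V_P[partial_sum xi k] = (k%:R * (s - c) + k%:R ^+ 2 * (c - m ^+ 2))%:E)%E.
Proof.
move=> le_kn.
have sum1 : \sum_(i < n | (i < k)%N) moment1 i = m *+ k.
  by rewrite -(sumr_ord_lt_const _ le_kn); apply: eq_bigr => i _; exact: moment1E.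
have sum2 : \sum_(i < n | (i < k)%N) \sum_(j < n | (j < k)%N) moment2 i j =
    k%:R * (s - c) + k%:R ^+ 2 * c.
  rewrite -(sumr_ord_lt_if_eq _ _ le_kn); apply: eq_bigr => i _; apply: eq_bigr => j _.
  exact: moment2E.
by rewrite variance_partial_sum sum1 sum2 -mulr_natl; congr EFin; ring.
Qed.

Lemma expectation_sqnorm_const : ('E_P[sqnorm xi] = (n%:R * s)%:E)%E.
Proof.
rewrite expectation_sqnorm; under eq_bigr => i _ do rewrite moment2E eqxx.
by rewrite sumr_const card_ord mulr_natl.
Qed.

End constant_moments.

Section exchangeable.
Hypothesis exch : exchangeable P xi.

Lemma expectation_permvec (s : 'S_n) (f : n.-tuple R -> R) :
  measurable_fun setT f ->
  f \o xi \in Lfun P 1 -> f \o permvec s xi \in Lfun P 1 ->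
  ('E_P[f \o permvec s xi] = 'E_P[f \o xi])%E.
Proof.
move=> mf /Lfun1_integrable f_int /Lfun1_integrable fs_int.
have mEf : measurable_fun setT (EFin \o f) by exact/measurable_EFinP.
have integral_pushforwardT (g : T -> n.-tuple R) : measurable_fun setT g ->
    P.-integrable setT (EFin \o (f \o g)) ->
    (\int[P]_w (f (g w))%:E = \int[pushforward P g]_y (f y)%:E)%E.
  by move=> mg g_int; rewrite integral_pushforward ?preimage_setT.
rewrite unlock !integral_pushforwardT //; last exact: measurable_permvec.
(* the measure structure of [pushforward P g] depends on a proof that [g] is
   measurable, so it has to be given explicitly *)
apply: (@eq_measure_integral _ _ _ _
  (measure_function_pushforward__canonical__measure_function_Measure P mxi)
  (measure_function_pushforward__canonical__measure_function_Measure P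
     (measurable_permvec s))).
by move=> B mB _; exact: exch.
Qed.

Lemma moment1_perm (s : 'S_n) (i : 'I_n) : moment1 (s i) = moment1 i.
Proof.
have coord_perm : (fun t => tnth t i) \o permvec s xi = coord xi (s i).
  by apply/funext => w; rewrite /= tnth_permvec.
rewrite /moment1 -coord_perm expectation_permvec ?coord_perm //.
- exact: measurable_tnth.
- exact: coord_Lfun1.
- exact: coord_Lfun1.
Qed.

Lemma moment2_perm (s : 'S_n) (i j : 'I_n) : moment2 (s i) (s j) = moment2 i j.
Proof.
have mul_perm : (fun t => tnth t i * tnth t j) \o permvec s xi =
    coord xi (s i) * coord xi (s j).
  by apply/funext => w; rewrite /= !tnth_permvec.
rewrite /moment2 -mul_perm expectation_permvec ?mul_perm //.
- by apply: measurable_funM; exact: measurable_tnth.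
- exact: coord_mul_Lfun1.
- exact: coord_mul_Lfun1.
Qed.

Lemma exchangeable_moments : (0 < n)%N -> exists m s c : R,
  (forall i, moment1 i = m) /\
  (forall i j, moment2 i j = if i == j then s else c).
Proof.
move=> n_gt0; pose i0 := Ordinal n_gt0.
have moment2_eq i j i' j' : (i == j) = (i' == j') -> moment2 i j = moment2 i' j'.
  by case/perm_pair_transitive => s [<- <-]; rewrite moment2_perm.
exists (moment1 i0), (moment2 i0 i0).
suff [c moment2E] : exists c, forall i j,
    moment2 i j = if i == j then moment2 i0 i0 else c.
  by exists c; split=> // i; rewrite -(moment1_perm (tperm i i0)) tpermL.
(* for [n = 1] there is no off-diagonal pair and [c] is arbitrary *)
case: (pickP [pred ij : 'I_n * 'I_n | ij.1 != ij.2]) => [[i1 j1] /= ne_ij1|no_pair].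
- exists (moment2 i1 j1) => i j.
  case: eqVneq => [<-|ne_ij]; first by apply: moment2_eq; rewrite !eqxx.
  by apply: moment2_eq; rewrite (negbTE ne_ij) (negbTE ne_ij1).
- exists 0 => i j; case: eqVneq => [<-|ne_ij]; first by apply: moment2_eq; rewrite !eqxx.
  by have := no_pair (i, j); rewrite /= ne_ij.
Qed.

End exchangeable.
End square_integrable.
End random_vector.

Unset Implicit Arguments.

Theorem proposition6p5 (d : measure_display) (T : measurableType d)
  (R : realType) (P : probability T R) (n : nat) (xi : T -> n.-tuple R) :
  (1 <= n)%N ->
  measurable_fun setT xi ->
  exchangeable P xi ->
  ('E_P[sqnorm xi] < +oo)%E ->
  forall k : nat, (1 <= k <= n)%N ->
  ('V_P[partial_sum xi k] <=
     (k%:R / n%:R)%:E * 'E_P[sqnorm xi]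
     + (k%:R ^+ 2 / n%:R ^+ 2)%:E * 'V_P[partial_sum xi n])%E.
Proof.
move=> n_gt0 mxi exch sqnorm_fin k /andP[k_gt0 le_kn].
have [m [s [c [moment1E moment2E]]]] := exchangeable_moments mxi sqnorm_fin exch n_gt0.
have s_ge0 : 0 <= s.
  by have := moment2_diag_ge0 P xi (Ordinal n_gt0); rewrite moment2E eqxx.
have := variance_ge0 P (partial_sum xi n).
rewrite !(variance_partial_sum_const mxi sqnorm_fin moment1E moment2E) //.
rewrite (expectation_sqnorm_const mxi sqnorm_fin moment2E).
rewrite -!EFinM -EFinD !lee_fin => VSn_ge0.
by apply: exchangeable_moment_ineq; rewrite ?ler1n ?ler_nat ?k_gt0.
Qed.
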